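(* (a) Suppose a mixed-level orthogonal array $OA(n,m,s_1\times\cdots\times s_m,2)$ exists with all $s_i\ge 3$, and let $t_1,\dots,t_m$ be integers with $1\le t_i\le s_i-2$. Then there exists an inter-class orthogonal main effect plan on $n$ runs with $2m$ factors partitioned into $m$ classes, the $i$-th class consisting of two factors $K_i$ and $L_i$ with $s_i-t_i$ and $t_i+1$ levels respectively. (b) This plan can be chosen so that, for each $i$, with levels of $K_i$ labelled $0,\dots,s_i-t_i-1$ and of $L_i$ labelled $0,\dots,t_i$: every pair $\{u,v\}$ of distinct nonzero levels of $K_i$ satisfies the pairwise proportional frequency condition with $L_i$, and every pair $\{u,v\}$ of distinct nonzero levels of $L_i$ satisfies the pairwise proportional frequency condition with $K_i$.
   Context: A mixed orthogonal array $OA(n,m,s_1\times\cdots\times s_m,2)$ is an $m\times n$ array whose $i$-th row has entries from an $s_i$-symbol set, such that for any two rows every ordered pair of symbols occurs equally often as a column. A main effect plan is an array with rows = factors and columns = runs. For factors $A,B$ on $n$ runs, $r_A(i)$ is the number of runs with $A$ at level $i$, and $n_{AB}(i,j)$ the number of runs with $A$ at level $i$ and $B$ at level $j$. $A$ and $B$ are orthogonal if $n_{AB}(i,j)=r_A(i)r_B(j)/n$ for all $i,j$. A plan is inter-class orthogonal (w.r.t. a partition of its factors into classes) if any two factors in different classes are orthogonal. A pair of levels $\{i,k\}$ of $A$ satisfies the pairwise proportional frequency condition with $B$ if $n_{AB}(i,j)/r_A(i)=n_{AB}(k,j)/r_A(k)$ for every level $j$ of $B$. *)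

(* Runs are indexed by 'I_n; a factor is a function from
   runs to levels (nat), with levels 0..s-1. *)
From mathcomp Require Import all_boot.
Set Implicit Arguments. Unset Strict Implicit. Unset Printing Implicit Defensive.

Definition lvl_count (n : nat) (f : 'I_n -> nat) (a : nat) : nat :=
  #|[set j : 'I_n | f j == a]|.

Definition pair_count (n : nat) (f g : 'I_n -> nat) (a b : nat) : nat :=
  #|[set j : 'I_n | (f j == a) && (g j == b)]|.

Definition is_factor (n : nat) (f : 'I_n -> nat) (s : nat) : Prop :=
  (forall j, f j < s) /\ (forall a, a < s -> 0 < lvl_count f a).

(* mixed orthogonal array OA(n, m, s_1 x ... x s_m, 2):
   an m x n array A (A i j = entry in row i, column j), row i over an
   s_i-symbol set; for any two distinct rows every ordered pair of symbols
   occurs equally often as a column. *)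
Definition is_OA2 (n m : nat) (s : 'I_m -> nat) (A : 'I_m -> 'I_n -> nat) : Prop :=
  (forall i, is_factor (A i) (s i)) /\
  (forall i k, i != k -> forall a b a' b',
      a < s i -> b < s k -> a' < s i -> b' < s k ->
      pair_count (A i) (A k) a b = pair_count (A i) (A k) a' b').

(* orthogonality: n_AB(a,b) = r_A(a) r_B(b) / n, cross-multiplied *)
Definition orthogonal (n : nat) (f : 'I_n -> nat) (sf : nat)
    (g : 'I_n -> nat) (sg : nat) : Prop :=
  forall a b, a < sf -> b < sg ->
    pair_count f g a b * n = lvl_count f a * lvl_count g b.

(* pairwise proportional frequency condition of levels {u,v} of f with g:
   n_fg(u,b)/r_f(u) = n_fg(v,b)/r_f(v) for all levels b of g
   (cross-multiplied; the r's are positive for genuine factors) *)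
Definition ppf (n : nat) (f g : 'I_n -> nat) (sg : nat) (u v : nat) : Prop :=
  forall b, b < sg ->
    pair_count f g u b * lvl_count f v = pair_count f g v b * lvl_count f u.

Definition interclass_orth_plan (n m : nat) (sK sL : 'I_m -> nat)
    (K L : 'I_m -> 'I_n -> nat) : Prop :=
  (forall i, is_factor (K i) (sK i) /\ is_factor (L i) (sL i)) /\
  (forall i i', i != i' ->
     [/\ orthogonal (K i) (sK i) (K i') (sK i'),
         orthogonal (K i) (sK i) (L i') (sL i') &
         orthogonal (L i) (sL i) (L i') (sL i')]).

(* Cut the level set {0, ..., s-1} of row A_i at k = s - t: K_i keeps the
   levels below k and sends the others to 0, L_i sends the levels below k
   to 0 and renumbers the others as 1, ..., t.  Both factors are functions
   of A_i, and functions of two OA(2) rows are orthogonal because the runs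
   split uniformly over the pairs of levels.  Within a class, a nonzero
   level of one factor forces level 0 of the other, so for two nonzero
   levels the conditional distribution of the other factor is in both cases
   concentrated at 0, which is the proportional frequency condition. *)

From mathcomp Require Import all_boot zify.

Set Implicit Arguments.
Unset Strict Implicit.
Unset Printing Implicit Defensive.

Lemma card_set_sum_nat (n : nat) (C : pred 'I_n) :
  #|[set j | C j]| = \sum_(j < n) (C j : nat).
Proof.
rewrite -sum1_card big_mkcond /=; apply: eq_bigr => j _.
by rewrite inE; case: (C j).
Qed.

Lemma sum_ord_eq_pick (s v : nat) (F : nat -> nat) : v < s ->
  \sum_(a < s) ((v == a) * F a) = F v.
Proof.
move=> lt_vs; rewrite (bigD1 (Ordinal lt_vs)) //= eqxx mul1n big1 ?addn0 //.
move=> a ne_av; suff /negbTE -> : v != a by [].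
by apply: contra ne_av => /eqP va; apply/eqP/val_inj.
Qed.

Section UniformPairs.

Variables (n s1 s2 c : nat) (x y : 'I_n -> nat).
Hypotheses (x_lt : forall j, x j < s1) (y_lt : forall j, y j < s2).
Hypothesis pair_count_uniform :
  forall a b, a < s1 -> b < s2 -> pair_count x y a b = c.

Lemma card_preim_pair (P Q : pred nat) :
  #|[set j | P (x j) && Q (y j)]| =
    (\sum_(a < s1) (P a : nat)) * (\sum_(b < s2) (Q b : nat)) * c.
Proof.
rewrite card_set_sum_nat.
transitivity (\sum_(j < n) \sum_(a < s1) \sum_(b < s2)
   ((P a : nat) * (Q b : nat) * (((x j == a) && (y j == b)) : nat))).
  apply: eq_bigr => j _.
  transitivity (\sum_(a < s1) ((x j == a) *
      \sum_(b < s2) ((y j == b) * ((P a : nat) * (Q b : nat))))); last first.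
    apply: eq_bigr => a _; rewrite big_distrr /=; apply: eq_bigr => b _.
    by case: (x j == a); case: (y j == b); rewrite /= ?muln1 ?muln0 ?mul1n ?mul0n.
  rewrite (@sum_ord_eq_pick _ _ (fun a => \sum_(b < s2)
      ((y j == b) * ((P a : nat) * (Q b : nat)))) (x_lt j)).
  rewrite (@sum_ord_eq_pick _ _ (fun b => (P (x j) : nat) * (Q b : nat)) (y_lt j)).
  by case: (P _); case: (Q _).
rewrite exchange_big /=; under eq_bigr => a _ do rewrite exchange_big /=.
transitivity (\sum_(a < s1) \sum_(b < s2) ((P a : nat) * (Q b : nat) * c)).
  apply: eq_bigr => a _; apply: eq_bigr => b _.
  rewrite -big_distrr /= -(pair_count_uniform (ltn_ord a) (ltn_ord b)).
  by rewrite /pair_count card_set_sum_nat.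
rewrite !big_distrl /=; apply: eq_bigr => a _.
by rewrite big_distrr big_distrl.
Qed.

Lemma orthogonal_comp (f g : nat -> nat) (sf sg : nat) :
  orthogonal (fun j => f (x j)) sf (fun j => g (y j)) sg.
Proof.
move=> a b _ _.
have card_n : n = #|[set j : 'I_n | predT (x j) && predT (y j)]|.
  by rewrite -[LHS]card_ord; apply: eq_card => j; rewrite inE.
have -> : lvl_count (fun j => f (x j)) a =
          #|[set j | (f (x j) == a) && predT (y j)]|.
  by apply: eq_card => j; rewrite !inE andbT.
have -> : lvl_count (fun j => g (y j)) b =
          #|[set j | predT (x j) && (g (y j) == b)]|.
  by apply: eq_card => j; rewrite !inE.
rewrite [X in _ * X = _]card_n /pair_count.
rewrite (card_preim_pair (fun v => f v == a) (fun v => g v == b)).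
rewrite (card_preim_pair (fun v => f v == a) predT).
rewrite (card_preim_pair predT (fun v => g v == b)) card_preim_pair.
nia.
Qed.

End UniformPairs.

Lemma orthogonal_comp_OA2 (n m : nat) (s : 'I_m -> nat) (A : 'I_m -> 'I_n -> nat)
    (i i' : 'I_m) (f g : nat -> nat) (sf sg : nat) :
  is_OA2 s A -> 0 < s i -> 0 < s i' -> i != i' ->
  orthogonal (fun j => f (A i j)) sf (fun j => g (A i' j)) sg.
Proof.
case=> factorA pairsA s_i_gt0 s_i'_gt0 ne_ii'.
apply: (orthogonal_comp (factorA i).1 (factorA i').1
          (c := pair_count (A i) (A i') 0 0)).
by move=> a b lt_a lt_b; apply: pairsA.
Qed.

Lemma is_factor_comp (n s s' : nat) (x : 'I_n -> nat) (h : nat -> nat) :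
  is_factor x s -> (forall a, a < s -> h a < s') ->
  (forall b, b < s' -> exists2 a, a < s & h a = b) ->
  is_factor (fun j => h (x j)) s'.
Proof.
case=> x_lt x_occ h_lt h_onto; split=> [j|b /h_onto [a lt_as <-]].
  exact/h_lt/x_lt.
have /card_gt0P [j] := x_occ a lt_as; rewrite !inE => /eqP xj_a.
by apply/card_gt0P; exists j; rewrite inE xj_a.
Qed.

Lemma pair_count_forced_zero (n : nat) (f g : 'I_n -> nat) (u b : nat) :
  (forall j, f j = u -> g j = 0) ->
  pair_count f g u b = (b == 0) * lvl_count f u.
Proof.
move=> g0; rewrite /pair_count /lvl_count; case: eqP => [-> | /eqP b_ne0].
  by rewrite mul1n; apply: eq_card => j; rewrite !inE andb_idr // => /eqP/g0->.
apply/eqP; rewrite mul0n cards_eq0; apply/eqP/setP => j; rewrite !inE.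
by apply/andP => -[/eqP/g0 -> /eqP b0]; rewrite -b0 eqxx in b_ne0.
Qed.

Lemma ppf_nonzero_levels (n : nat) (f g : 'I_n -> nat) (sg u v : nat) :
  (forall j, 0 < f j -> g j = 0) -> 0 < u -> 0 < v -> ppf f g sg u v.
Proof.
move=> g0 u_gt0 v_gt0 b _.
have forced w : 0 < w -> forall j, f j = w -> g j = 0.
  by move=> w_gt0 j fj; apply/g0; rewrite fj.
rewrite (pair_count_forced_zero _ (forced u u_gt0)).
by rewrite (pair_count_forced_zero _ (forced v v_gt0)) mulnAC.
Qed.

Definition low_level (k a : nat) : nat := if a < k then a else 0.
Definition high_level (k a : nat) : nat := if a < k then 0 else a - k + 1.

Section LevelSplit.

Variables (s k : nat).
Hypotheses (k_gt0 : 0 < k) (k_le_s : k <= s).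

Lemma low_level_lt a : low_level k a < k.
Proof. by rewrite /low_level; case: ifP. Qed.

Lemma low_level_onto b : b < k -> exists2 a, a < s & low_level k a = b.
Proof. by move=> lt_bk; exists b; [lia | rewrite /low_level lt_bk]. Qed.

Lemma high_level_lt a : a < s -> high_level k a < s - k + 1.
Proof. by rewrite /high_level; case: ifP; lia. Qed.

Lemma high_level_onto b : b < s - k + 1 -> exists2 a, a < s & high_level k a = b.
Proof.
move=> lt_b; case: (posnP b) => [-> | b_gt0].
  by exists 0; [lia | rewrite /high_level k_gt0].
by exists (b - 1 + k); [lia | rewrite /high_level ifF; lia].
Qed.

End LevelSplit.

Lemma high_level_eq0 (k a : nat) : 0 < low_level k a -> high_level k a = 0.
Proof. by rewrite /low_level /high_level; case: ifP. Qed.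

Lemma low_level_eq0 (k a : nat) : 0 < high_level k a -> low_level k a = 0.
Proof. by rewrite /low_level /high_level; case: ifP. Qed.

Theorem theorem3p1 (n m : nat) (s : 'I_m -> nat) (A : 'I_m -> 'I_n -> nat)
  (hA : is_OA2 s A) (hs : forall i, 3 <= s i)
  (t : 'I_m -> nat) (ht : forall i, 1 <= t i <= s i - 2) :
  exists K L : 'I_m -> 'I_n -> nat,
    interclass_orth_plan (fun i => s i - t i) (fun i => t i + 1) K L /\
    (forall i,
      (forall u v, 0 < u -> 0 < v -> u != v ->
         u < s i - t i -> v < s i - t i -> ppf (K i) (L i) (t i + 1) u v) /\
      (forall u v, 0 < u -> 0 < v -> u != v ->
         u < t i + 1 -> v < t i + 1 -> ppf (L i) (K i) (s i - t i) u v)).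
Proof.
exists (fun i j => low_level (s i - t i) (A i j)),
       (fun i j => high_level (s i - t i) (A i j)).
have s_gt0 i : 0 < s i by have := hs i; lia.
split; [split=> [i | i i' ne_ii'] | move=> i; split=> u v u_gt0 v_gt0 _ _ _].
- have k_gt0 : 0 < s i - t i by have := ht i; lia.
  have k_le_s : s i - t i <= s i by exact: leq_subr.
  have -> : t i + 1 = s i - (s i - t i) + 1 by have := ht i; lia.
  split; apply: is_factor_comp (hA.1 i) _ _.
  + by move=> a _; apply: low_level_lt.
  + exact: low_level_onto.
  + exact: high_level_lt.
  + exact: high_level_onto.
- by split; apply: orthogonal_comp_OA2 hA (s_gt0 i) (s_gt0 i') ne_ii'.
- by apply: ppf_nonzero_levels u_gt0 v_gt0 => j; apply: high_level_eq0.
- by apply: ppf_nonzero_levels u_gt0 v_gt0 => j; apply: low_level_eq0.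
Qed.
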